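(* Let $n\ge 4$ be an integer, let $B_n$ be the boundary simplicial complex of the bipyramid over an $n$-gon (defined in the context), and let $I_{B_n}\subset k[x_0,\dots,x_{n+1}]$ be its Stanley-Reisner ideal. Then the Waldschmidt constant of $I_{B_n}$ is $$\gamma(I_{B_n})=\frac{n}{n-2}.$$
   Context: Let $k$ be a field and $n\ge 3$. The base $n$-gon $Q_n$ has vertices $1,\dots,n$ in cyclic order, so its edges are $\{i,i+1\}$ for $1\le i\le n-1$ and $\{n,1\}$. The bipyramid $B_n$ over $Q_n$ has two extra vertices $0$ (upper) and $n+1$ (lower); as a simplicial complex on $\{0,1,\dots,n+1\}$, $B_n$ is the boundary complex of the bipyramid, i.e. the complex whose facets are the triangles $\{0,i,j\}$ and $\{n+1,i,j\}$ for every edge $\{i,j\}$ of $Q_n$. The Stanley-Reisner ideal $I_{\Delta}$ of a simplicial complex $\Delta$ on $\{0,\dots,n+1\}$ is the ideal of $R=k[x_0,\dots,x_{n+1}]$ generated by the monomials $\prod_{i\in\tau}x_i$ with $\tau\notin\Delta$. For a homogeneous ideal $0\ne I\subseteq R$, the $m$-th symbolic power is $I^{(m)}=R\cap\bigcap_{P\in \mathrm{Ass}(I)} I^mR_P$, $\alpha(I)=\min\{t: I_t\neq 0\}$, and the Waldschmidt constant is $\gamma(I)=\lim_{m\to\infty}\alpha(I^{(m)})/m$. *)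

From Stdlib Require Reals.
From HB Require Import structures.
From mathcomp Require Import all_boot all_order all_algebra.
From mathcomp Require Import mpoly.
Set Implicit Arguments.
Unset Strict Implicit.
Unset Printing Implicit Defensive.
Import GRing.Theory.
Local Open Scope ring_scope.

Section Ideals.
Variables (k : fieldType) (N : nat).
Local Notation P := {mpoly k[N]}.

Definition is_ideal (I : P -> Prop) : Prop :=
  I 0 /\ (forall a b, I a -> I b -> I (a + b)) /\ (forall r a, I a -> I (r * a)).

Definition ideal_gen (S : P -> Prop) : P -> Prop :=
  fun f => exists s : seq (P * P),
    (forall p, p \in s -> S p.2) /\ f = \sum_(p <- s) p.1 * p.2.

Definition ideal_pow (I : P -> Prop) (m : nat) : P -> Prop :=
  ideal_gen (fun g => exists fs : m.-tuple P,
                (forall i, I (tnth fs i)) /\ g = \prod_(i < m) tnth fs i).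

Definition is_prime_ideal (Q : P -> Prop) : Prop :=
  is_ideal Q /\ ~ Q 1 /\ (forall a b, Q (a * b) -> Q a \/ Q b).

Definition ass (I : P -> Prop) (Q : P -> Prop) : Prop :=
  is_prime_ideal Q /\ exists g : P, forall f, Q f <-> I (f * g).

(* Symbolic power  I^(m) = R ∩ ⋂_{Q ∈ Ass I} I^m R_Q.  Since R is a domain,
   f/1 ∈ I^m R_Q  iff  s f ∈ I^m for some s ∉ Q. *)
Definition symb_pow (I : P -> Prop) (m : nat) : P -> Prop :=
  fun f => forall Q, ass I Q -> exists s : P, ~ Q s /\ ideal_pow I m (s * f).

Definition has_deg (J : P -> Prop) (t : nat) : Prop :=
  exists f : P, J f /\ f != 0 /\ f \is [in k[N], t.-homog].

Definition is_alpha (J : P -> Prop) (a : nat) : Prop :=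
  has_deg J a /\ forall t, has_deg J t -> (a <= t)%N.

Definition SR_ideal (face : {set 'I_N} -> Prop) : P -> Prop :=
  ideal_gen (fun g => exists tau : {set 'I_N},
                ~ face tau /\ g = \prod_(i in tau) 'X_i).

Definition waldschmidt_is (I : P -> Prop) (c : Reals.Rdefinitions.R) : Prop :=
  exists a : nat -> nat,
    (forall m, (0 < m)%N -> is_alpha (symb_pow I m) (a m)) /\
    Reals.Rseries.Un_cv
      (fun m => Reals.Rdefinitions.Rdiv (Reals.Raxioms.INR (a m)) (Reals.Raxioms.INR m)) c.
End Ideals.

Definition qn_edge (n i j : nat) : bool :=
  [|| [&& 1 <= i, i < n & j == i.+1], [&& 1 <= j, j < n & i == j.+1],
      (i == n) && (j == 1) | (j == n) && (i == 1)]%N.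

(* Faces of the bipyramid B_n on vertices 0..n+1: subsets of some facet
   {0,i,j} or {n+1,i,j} with {i,j} an edge of Q_n. *)
Definition bipyr_face (n : nat) (tau : {set 'I_(n.+2)}) : Prop :=
  exists a i j : nat, (a == 0 \/ a == n.+1)%N /\ qn_edge n i j /\
    forall v : 'I_(n.+2), v \in tau -> (v == a :> nat) || (v == i :> nat) || (v == j :> nat).

(* For a facet F of a simplicial complex Delta, the ideal generated by the
   variables outside F is the associated prime (I_Delta : x_F).  Under the grading
   x_i |-> x_i T^[i \notin F] every element of I_Delta has T-order >= 1, hence every element
   of I_Delta^m has T-order >= m; since the multipliers s \notin (I_Delta : x_F) allowed in
   the symbolic power have T-order 0, every monomial of an element of I^(m) uses at least m
   variables outside F.  For B_n the facets are the 2n triangles {apex, i, i+1}; averaging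
   over all of them gives n m <= (n-2) deg.  Every associated prime of I_{B_n} misses some base vertex x_i.  Then
   x_i^((n-3)c) (x_1 ... x_n)^c is x_i^c times a product of (n-2)c non-edges (x_i x_v for
   the n-3 non-neighbours v of i, and the two neighbours of i together), so
   (x_1 ... x_n)^c lies in I^(m) once (n-2)c >= m.  Hence alpha(I^(m)) is squeezed between
   nm/(n-2) and n(floor(m/(n-2)) + 1). *)

From Stdlib Require Import Reals Lra Classical ClassicalEpsilon.
From HB Require Import structures.
From mathcomp Require Import all_boot all_order all_algebra.
From mathcomp Require Import mpoly zify.

Set Implicit Arguments.
Unset Strict Implicit.
Unset Printing Implicit Defensive.
Import GRing.Theory.
Local Open Scope ring_scope.

Section GeneratedIdeals.
Variables (k : fieldType) (N : nat).
Local Notation P := {mpoly k[N]}.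
Implicit Types (S T U : P -> Prop) (f g r : P).

Lemma ideal_gen_sub S g : S g -> ideal_gen S g.
Proof.
by move=> Sg; exists [:: (1, g)]; rewrite big_seq1 mul1r; split=> // p; rewrite inE => /eqP ->.
Qed.

Lemma ideal_genD S f g : ideal_gen S f -> ideal_gen S g -> ideal_gen S (f + g).
Proof.
move=> [s [Ss ->]] [t [St ->]]; exists (s ++ t); split; last by rewrite big_cat.
by move=> p; rewrite mem_cat => /orP [/Ss|/St].
Qed.

Lemma ideal_genMl S r g : ideal_gen S g -> ideal_gen S (r * g).
Proof.
move=> [s [Ss ->]]; exists [seq (r * p.1, p.2) | p <- s]; split.
  by move=> p /mapP [q /Ss Sq ->].
by rewrite big_map mulr_sumr; apply: eq_bigr => p _; rewrite mulrA.
Qed.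

Lemma ideal_gen_sum S (I : eqType) (s : seq I) (F : I -> P) :
  (forall i, i \in s -> ideal_gen S (F i)) -> ideal_gen S (\sum_(i <- s) F i).
Proof.
move=> SF; rewrite big_seq; apply: big_ind => //; last exact: ideal_genD.
by exists [::]; rewrite big_nil.
Qed.

Lemma ideal_gen_trans S T g :
  (forall x, S x -> ideal_gen T x) -> ideal_gen S g -> ideal_gen T g.
Proof. by move=> ST [s [Ss ->]]; apply: ideal_gen_sum => p /Ss /ST; apply: ideal_genMl. Qed.

Lemma ideal_genM S T U f g :
  (forall x y, S x -> T y -> U (x * y)) ->
  ideal_gen S f -> ideal_gen T g -> ideal_gen U (f * g).
Proof.
move=> STU [s [Ss ->]] [t [St ->]]; rewrite mulr_suml; apply: ideal_gen_sum => p /Ss Sp.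
rewrite -mulrA mulr_sumr; apply: ideal_genMl; apply: ideal_gen_sum => q /St Tq.
by rewrite mulrCA; apply/ideal_genMl/ideal_gen_sub/STU.
Qed.

Definition is_prod_of (I : P -> Prop) (m : nat) g :=
  exists s : seq P, [/\ size s = m, forall x, x \in s -> I x & g = \prod_(x <- s) x].

Lemma ideal_powE (I : P -> Prop) m g : ideal_pow I m g <-> ideal_gen (is_prod_of I m) g.
Proof.
split; apply: ideal_gen_trans => {}g.
  move=> [fs [Ifs ->]]; apply: ideal_gen_sub; exists (val fs); split.
  - exact: size_tuple.
  - by move=> x /tnthP [i ->].
  - by rewrite (big_tuple _ _ fs xpredT id).
move=> [s [/eqP sz Is ->]]; apply: ideal_gen_sub; exists (Tuple sz); split.
  by move=> i; apply/Is/mem_tnth.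
by rewrite -(big_tuple _ _ (Tuple sz) xpredT id).
Qed.

Lemma ideal_pow1 (I : P -> Prop) g : I g -> ideal_pow I 1 g.
Proof.
move=> Ig; apply/ideal_powE/ideal_gen_sub; exists [:: g]; rewrite big_seq1.
by split=> // x; rewrite inE => /eqP ->.
Qed.

Lemma ideal_powD (I : P -> Prop) a b f g :
  ideal_pow I a f -> ideal_pow I b g -> ideal_pow I (a + b) (f * g).
Proof.
move=> /ideal_powE If /ideal_powE Ig; apply/ideal_powE; apply: ideal_genM If Ig.
move=> _ _ [s [<- Is ->]] [t [<- It ->]]; exists (s ++ t).
rewrite size_cat big_cat; split=> // x; rewrite mem_cat => /orP [/Is|/It] //.
Qed.

Lemma ideal_powX (I : P -> Prop) a c g :
  ideal_pow I a g -> ideal_pow I (a * c) (g ^+ c).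
Proof.
move=> Ig; elim: c => [|c IH]; last by rewrite mulnS exprS; apply: ideal_powD.
rewrite muln0 expr0; apply/ideal_powE/ideal_gen_sub.
by exists [::]; rewrite big_nil.
Qed.

Lemma ideal_pow_le (I : P -> Prop) a b g :
  (b <= a)%N -> ideal_pow I a g -> ideal_pow I b g.
Proof.
move=> le_ba /ideal_powE Ig; apply/ideal_powE; apply: ideal_gen_trans Ig => _ [s [sz Is ->]].
rewrite -(cat_take_drop b s) big_cat /= mulrC; apply/ideal_genMl/ideal_gen_sub.
exists (take b s); split=> [||//]; first by rewrite size_take sz; case: ltngtP le_ba.
by move=> x /mem_take /Is.
Qed.

Lemma ideal_pow_prod (I : P -> Prop) (A : {set 'I_N}) (G : 'I_N -> P) :
  (forall v, v \in A -> I (G v)) -> ideal_pow I #|A| (\prod_(v in A) G v).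
Proof.
move=> IG; apply/ideal_powE/ideal_gen_sub; exists [seq G v | v <- enum A].
rewrite size_map -cardE big_map big_enum; split=> // _ /mapP [v + ->].
by rewrite mem_enum; apply: IG.
Qed.

Lemma prime_ideal_notX (Q : P -> Prop) g e :
  is_prime_ideal Q -> ~ Q g -> ~ Q (g ^+ e).
Proof.
move=> [_ [Q1 Qprime]] Qg; elim: e => [|e IH]; first by rewrite expr0.
by rewrite exprS => /Qprime [].
Qed.

End GeneratedIdeals.

Section VanishingOrder.
Variable R : nzRingType.
Implicit Types p q : {poly R}.

Definition vanish_below (m : nat) p := forall j, (j < m)%N -> p`_j = 0.

Lemma vanish_below_sum m (I : eqType) (s : seq I) (F : I -> {poly R}) :
  (forall i, i \in s -> vanish_below m (F i)) -> vanish_below m (\sum_(i <- s) F i).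
Proof.
by move=> mF j ltjm; rewrite coef_sum big_seq big1 // => i /mF/(_ j ltjm).
Qed.

Lemma vanish_belowMl m p q : vanish_below m p -> vanish_below m (q * p).
Proof.
move=> mp j ltjm; rewrite coefM big1 // => i _; rewrite mp ?mulr0 //.
exact: leq_ltn_trans (leq_subr _ _) ltjm.
Qed.

Lemma vanish_belowM a b p q :
  vanish_below a p -> vanish_below b q -> vanish_below (a + b) (p * q).
Proof.
move=> ap bq j ltj; rewrite coefM big1 // => i _.
have := ltn_ord i; rewrite ltnS => le_ij.
have [lt_ia|le_ai] := ltnP i a; first by rewrite ap ?mul0r.
by rewrite bq ?mulr0 //; lia.
Qed.

End VanishingOrder.

Lemma vanish_below_cancel (R : idomainType) m (a p : {poly R}) :
  a`_0 != 0 -> vanish_below m (a * p) -> vanish_below m p.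
Proof.
move=> a0 map j; elim/ltn_ind: j => j IH ltjm.
have := map j ltjm; rewrite coefMr big_ord_recr /= subnn big1 ?add0r.
  by move/eqP; rewrite mulf_eq0 (negbTE a0) => /eqP.
by move=> i _; rewrite IH ?mulr0 //= (ltn_trans _ ltjm).
Qed.

Section OutsideDegree.
Variables (k : fieldType) (N : nat) (F : {set 'I_N}).

Definition out_deg (u : 'X_{1..N}) : nat := (\sum_(i < N) (i \notin F) * u i)%N.

Definition out_var (i : 'I_N) : {poly {mpoly k[N]}} := ('X_i)%:P * 'X ^+ (i \notin F).

End OutsideDegree.

Arguments out_var {k N} F i.

(* Locked: otherwise unification unfolds [mmap] when comparing two gradings and does not
   terminate in practice. *)
HB.lock Definition out_grade (k : fieldType) (N : nat) (F : {set 'I_N}) (p : {mpoly k[N]}) :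
  {poly {mpoly k[N]}} := mmap (polyC \o mpolyC N (R := k)) (out_var F) p.

Arguments out_grade {k N} F p.

Section OutsideGrading.
Variables (k : fieldType) (N : nat) (F : {set 'I_N}).
Local Notation P := {mpoly k[N]}.

Fact out_grade_is_zmod_morphism : zmod_morphism (out_grade F : P -> _).
Proof. by move=> p q; rewrite unlock rmorphB. Qed.

Fact out_grade_is_monoid_morphism : monoid_morphism (out_grade F : P -> _).
Proof. by split=> [|p q]; rewrite unlock ?rmorphM ?rmorph1. Qed.

HB.instance Definition _ :=
  GRing.isZmodMorphism.Build P {poly P} (out_grade F) out_grade_is_zmod_morphism.
HB.instance Definition _ :=
  GRing.isMonoidMorphism.Build P {poly P} (out_grade F) out_grade_is_monoid_morphism.

Lemma out_gradeM (p q : P) : out_grade F (p * q) = out_grade F p * out_grade F q.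
Proof. exact: rmorphM. Qed.

Lemma out_grade_sum (I : Type) (r : seq I) (G : I -> P) :
  out_grade F (\sum_(i <- r) G i) = \sum_(i <- r) out_grade F (G i).
Proof. exact: rmorph_sum. Qed.

Lemma out_gradeX i : out_grade F 'X_i = out_var F i :> {poly P}.
Proof. by rewrite unlock mmapX mmap1U. Qed.

Lemma out_grade_prodX (A : {set 'I_N}) :
  out_grade F (\prod_(i in A) 'X_i) = \prod_(i in A) out_var F i :> {poly P}.
Proof. by rewrite rmorph_prod; apply: eq_bigr => i _; exact: out_gradeX. Qed.

Lemma coef_out_grade (p : P) j u :
  ((out_grade F p)`_j)@_u = if out_deg F u == j then p@_u else 0.
Proof.
have termE v : mmap1 (out_var F) v = ('X_[v])%:P * 'X ^+ out_deg F v :> {poly P}.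
  rewrite /mmap1 /out_var /out_deg; under eq_bigr => i _ do rewrite exprMn -rmorphXn -exprM.
  by rewrite big_split /= -rmorph_prod -prodrXr mpolyXE_id.
rewrite unlock /mmap coef_sum raddf_sum /=.
under eq_bigr => v _ do rewrite termE /= mulrA -rmorphM coefCM coefXn mulr_natr mulrb
  mul_mpolyC fun_if mcoeffZ mcoeffX mcoeff0 eq_sym.
have [pu|pu0] := boolP (u \in msupp p).
  rewrite (bigD1_seq u) ?msupp_uniq //= eqxx mulr1 big1 ?addr0 // => v /negbTE ->.
  by rewrite mulr0 if_same.
rewrite (memN_msupp_eq0 pu0) if_same big_seq big1 // => v vp.
by rewrite (_ : (v == u) = false) ?mulr0 ?if_same //; apply: contraNF pu0 => /eqP <-.
Qed.

End OutsideGrading.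

Section FacePrime.
Variables (k : fieldType) (N : nat) (F : {set 'I_N}).
Local Notation P := {mpoly k[N]}.

(* The prime ideal generated by the variables outside F: its elements are the polynomials
   all of whose monomials have positive [out_deg F]. *)
Definition face_prime (f : P) : Prop := (out_grade F f)`_0 = 0.

Lemma face_prime_is_prime : is_prime_ideal face_prime.
Proof.
rewrite /face_prime; split; [split; [|split]|split].
- by rewrite rmorph0 coef0.
- by move=> a b a0 b0; rewrite rmorphD coefD a0 b0 addr0.
- by move=> r a a0; rewrite rmorphM coef0M a0 mulr0.
- by rewrite rmorph1 coef1 => /eqP; rewrite oner_eq0.
- move=> a b; rewrite rmorphM coef0M => /eqP; rewrite mulf_eq0.
  by case/orP=> /eqP; [left|right].
Qed.

Lemma ideal_pow_vanish (I : P -> Prop) m g :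
  (forall x, I x -> vanish_below 1 (out_grade F x)) ->
  ideal_pow I m g -> vanish_below m (out_grade F g).
Proof.
move=> I1 /ideal_powE [s [Is ->]]; rewrite out_grade_sum; apply: vanish_below_sum.
move=> p /Is [t [<- It ->]]; rewrite out_gradeM; apply: vanish_belowMl; rewrite rmorph_prod.
elim: t It => [|x t IH] It; first by rewrite big_nil.
rewrite big_cons [size _]/= -add1n; apply: vanish_belowM.
  by apply/I1/It; rewrite inE eqxx.
by apply: IH => y ty; apply: It; rewrite inE ty orbT.
Qed.

End FacePrime.

Lemma mpolyX_neq0 (R : nzRingType) n (m : 'X_{1..n}) : 'X_[m] != 0 :> {mpoly R[n]}.
Proof.
by apply/eqP => /(congr1 (mcoeff m)); rewrite mcoeffX eqxx mcoeff0 => /eqP; rewrite oner_eq0.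
Qed.

Section SquarefreeMonomials.
Variable N : nat.
Implicit Types (A : {set 'I_N}) (u : 'X_{1..N}).

Definition mnm_of_set A : 'X_{1..N} := (\sum_(i in A) U_(i))%MM.

Definition mnm_supp u : {set 'I_N} := [set i | u i != 0%N].

Lemma mnm_of_setE A i : mnm_of_set A i = (i \in A).
Proof.
rewrite mnm_sumE (eq_bigr (fun j => nat_of_bool (j == i))) => [|j _]; last by rewrite mnm1E.
rewrite big_mkcond (bigD1 i) //= eqxx big1 ?addn0 => [|j /negbTE ->]; last exact: if_same.
by case: (i \in A).
Qed.

Lemma mdeg_mnm_of_set A : mdeg (mnm_of_set A) = #|A|.
Proof. by rewrite mdeg_sum (eq_bigr (fun => 1%N)) ?sum1_card // => i _; rewrite mdeg1. Qed.

Lemma mnm_of_set_le A u : (mnm_of_set A <= u)%MM = (A \subset mnm_supp u).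
Proof.
apply/mnm_lepP/subsetP => [le_Au i iA | sub_Au i].
  by have := le_Au i; rewrite mnm_of_setE iA inE; case: (u i).
by rewrite mnm_of_setE; case: (boolP (i \in A)) => // /sub_Au; rewrite inE; case: (u i).
Qed.

Lemma prodX_mnm_of_set (k : fieldType) A :
  \prod_(i in A) 'X_i = 'X_[mnm_of_set A] :> {mpoly k[N]}.
Proof. exact: mprodXE. Qed.

End SquarefreeMonomials.

Section StanleyReisner.
Variables (k : fieldType) (N : nat) (face : {set 'I_N} -> Prop).
Local Notation P := {mpoly k[N]}.
Local Notation I := (SR_ideal (k := k) face).

Definition down_closed := forall A B : {set 'I_N}, A \subset B -> face B -> face A.

Definition is_facet (F : {set 'I_N}) := face F /\ forall v, v \notin F -> ~ face (v |: F).

Lemma SR_ideal_of_msupp (g : P) : (forall u, u \in msupp g -> ~ face (mnm_supp u)) -> I g.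
Proof.
move=> gI; rewrite (mpolyE g); apply: ideal_gen_sum => u /gI nface.
have le_u : (mnm_of_set (mnm_supp u) <= u)%MM by rewrite mnm_of_set_le.
rewrite -(submK le_u) mpolyXD scalerAl -prodX_mnm_of_set; apply/ideal_genMl/ideal_gen_sub.
by exists (mnm_supp u).
Qed.

Hypothesis face_down : down_closed.

Lemma msupp_SR_ideal_nonface (g : P) u : I g -> u \in msupp g -> ~ face (mnm_supp u).
Proof.
move=> [s [Ss ->]] + fu; rewrite mcoeff_msupp raddf_sum big_seq big1 ?eqxx //.
move=> p /Ss [tau [ntau ->]].
rewrite prodX_mnm_of_set; apply/memN_msupp_eq0/negP.
rewrite (perm_mem (msuppMX _ _)) => /mapP [v _ uE]; apply: ntau; apply: face_down fu.
by rewrite -mnm_of_set_le uE lem_addr.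
Qed.

Lemma SR_ideal_vanish_below1 F (g : P) : face F -> I g -> vanish_below 1 (out_grade F g).
Proof.
move=> fF [s [Ss ->]]; rewrite out_grade_sum; apply: vanish_below_sum.
move=> p /Ss [tau [ntau ->]].
rewrite out_gradeM; apply: vanish_belowMl.
have /set0Pn [v] : tau :\: F != set0.
  by apply/negP; rewrite setD_eq0 => /face_down/(_ fF).
rewrite inE => /andP [vF vtau].
rewrite out_grade_prodX (bigD1 v) //= mulrC; apply: vanish_belowMl.
by move=> j; rewrite ltnS leqn0 /out_var vF expr1 coefMX => /eqP ->.
Qed.

Lemma facet_prime_ass F : is_facet F -> ass I (face_prime F).
Proof.
move=> [fF maxF]; split; first exact: face_prime_is_prime.
exists 'X_[mnm_of_set F] => f; split=> [f0 | If].
  apply: SR_ideal_of_msupp => w; rewrite (perm_mem (msuppMX _ _)) => /mapP [u fu ->].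
  have : out_deg F u != 0%N.
    apply: contraTneq fu => u0; rewrite mcoeff_msupp negbK.
    by have := coef_out_grade F f 0 u; rewrite u0 eqxx f0 mcoeff0 => <-.
  rewrite /out_deg sum_nat_eq0 negb_forall => /existsP [v].
  case: (boolP (v \in F)) => //= vF; rewrite mul1n => uv.
  move=> fw; apply: (maxF v vF); apply: face_down fw; apply/subsetP => i.
  rewrite !inE mnmDE mnm_of_setE.
  by case/orP => [/eqP -> | ->]; rewrite ?(negbTE vF) ?add0n // addn_eq0.
have := SR_ideal_vanish_below1 fF If (ltn0Sn 0).
rewrite out_gradeM coef0M -prodX_mnm_of_set out_grade_prodX => /eqP.
rewrite (eq_bigr (fun i => ('X_i)%:P)) => [|i iF]; last by rewrite /out_var iF mulr1.
rewrite -rmorph_prod coefC /= prodX_mnm_of_set mulf_eq0 (negbTE (mpolyX_neq0 _ _)) orbF.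
by move/eqP.
Qed.

Lemma symb_pow_out_deg_ge F m (f : P) u :
  is_facet F -> symb_pow I m f -> u \in msupp f -> (m <= out_deg F u)%N.
Proof.
move=> facetF If fu; have [s [s0 Isf]] := If _ (facet_prime_ass facetF).
have := ideal_pow_vanish (fun x => SR_ideal_vanish_below1 (proj1 facetF)) Isf.
rewrite out_gradeM => /(vanish_below_cancel (introN eqP s0)) fm.
rewrite leqNgt; apply: contraL fu => /fm fu0; rewrite mcoeff_msupp negbK.
by have := coef_out_grade F f (out_deg F u) u; rewrite eqxx fu0 mcoeff0 => <-.
Qed.

End StanleyReisner.

Section Bipyramid.
Variable n : nat.

Definition cyc_succ (i : nat) : nat := if (i < n)%N then i.+1 else 1%N.
Definition cyc_pred (i : nat) : nat := if (1 < i)%N then i.-1 else n.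

Lemma cyc_succE i : (1 <= i <= n)%N ->
  ((i < n)%N /\ cyc_succ i = i.+1) \/ (i = n /\ cyc_succ i = 1%N).
Proof. rewrite /cyc_succ => ?; case: (ltnP i n) => ?; [left|right]; split => //; lia. Qed.

Lemma cyc_predE i : (1 <= i <= n)%N ->
  ((1 < i)%N /\ cyc_pred i = i.-1) \/ (i = 1%N /\ cyc_pred i = n).
Proof. rewrite /cyc_pred => ?; case: (ltnP 1 i) => ?; [left|right]; split => //; lia. Qed.

Lemma qn_edgeP i j : (1 <= n)%N -> qn_edge n i j ->
  [/\ (1 <= i <= n)%N, (1 <= j <= n)%N &
   j = i.+1 \/ i = j.+1 \/ (i = n /\ j = 1%N) \/ (j = n /\ i = 1%N)].
Proof.
move=> ?; case/or4P => [/and3P [? ? /eqP ?]|/and3P [? ? /eqP ?]|/andP [/eqP ? /eqP ?]|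
  /andP [/eqP ? /eqP ?]]; split; lia.
Qed.

Lemma qn_edgeC i j : qn_edge n i j = qn_edge n j i.
Proof. by rewrite /qn_edge; do 4!case: (_ && _). Qed.

Lemma qn_edge_succ i : (2 <= n)%N -> (1 <= i <= n)%N -> qn_edge n i (cyc_succ i).
Proof. by rewrite /qn_edge /cyc_succ => ? ?; case: (ltnP i n) => ?; lia. Qed.

Lemma qn_edge_nbr i j : (3 <= n)%N -> (1 <= i <= n)%N -> qn_edge n i j ->
  j = cyc_pred i \/ j = cyc_succ i.
Proof. move=> ? Hi /qn_edgeP []; first lia; move: (cyc_predE Hi) (cyc_succE Hi); lia. Qed.

Lemma qn_nonedge_pred_succ i : (4 <= n)%N -> (1 <= i <= n)%N ->
  ~~ qn_edge n (cyc_pred i) (cyc_succ i).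
Proof.
move=> ? Hi; apply/negP => /qn_edgeP []; first lia.
move: (cyc_predE Hi) (cyc_succE Hi); lia.
Qed.

Local Notation "''V'" := 'I_n.+2.

Lemma bipyr_face_down_closed : down_closed (@bipyr_face n).
Proof.
move=> A B /subsetP sAB [a [i [j [apex [ij Bij]]]]]; exists a, i, j.
by split=> //; split=> // v /sAB /Bij.
Qed.

Definition bipyr_facet (a i : nat) : {set 'V} :=
  [set v : 'V | [|| v == a :> nat, v == i :> nat | v == cyc_succ i :> nat]].

Lemma bipyr_facet_is_facet a i : (3 <= n)%N -> (a == 0 \/ a == n.+1)%N ->
  (1 <= i <= n)%N -> is_facet (@bipyr_face n) (bipyr_facet a i).
Proof.
move=> n3 apex Hi; split.
  exists a, i, (cyc_succ i); split=> //; split=> [|v]; last by rewrite inE orbA.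
  by apply: qn_edge_succ; lia.
move=> v; rewrite !inE !negb_or => /and3P [/eqP va /eqP vi /eqP vs].
move=> [a' [j [j' [apex' [ejj' Bjj']]]]]; have [Hj Hj' jj'] := qn_edgeP (ltnW (ltnW n3)) ejj'.
have in_face x : (x < n.+2)%N -> [|| x == a, x == i | x == cyc_succ i] ->
    x = a' \/ x = j \/ x = j'.
  move=> ltx xF; have := Bjj' (inord x); rewrite !inE inordK // xF orbT.
  by case/(_ isT)/orP => [/orP [] | ] /eqP; auto.
have := in_face a; have := in_face i; have := in_face (cyc_succ i).
have := Bjj' v; rewrite !inE eqxx => /(_ isT).
case/orP => [/orP [] | ] /eqP; move: (cyc_succE Hi) apex apex' => + [] /eqP + [] /eqP;
  rewrite ?eqxx ?orbT; lia.
Qed.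

Lemma bipyr_nonedge_nonface x y : (1 <= n)%N -> (1 <= x <= n)%N -> (1 <= y <= n)%N ->
  x <> y -> ~~ qn_edge n x y -> ~ @bipyr_face n [set inord x; inord y].
Proof.
move=> n1 Hx Hy xy nxy [a [j [j' [apex [ejj' Bjj']]]]].
have /qn_edgeP [//|Hj Hj' _] := ejj'.
have Vx : x = a \/ x = j \/ x = j'.
  move: (Bjj' (inord x) (set21 _ _)); rewrite inordK; last lia.
  by case/orP => [/orP [] | ] /eqP; auto.
have Vy : y = a \/ y = j \/ y = j'.
  move: (Bjj' (inord y) (set22 _ _)); rewrite inordK; last lia.
  by case/orP => [/orP [] | ] /eqP; auto.
have [[? ?]|[? ?]] : (x = j /\ y = j') \/ (x = j' /\ y = j) by case: apex => /eqP; lia.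
  by subst; rewrite ejj' in nxy.
by subst; rewrite qn_edgeC ejj' in nxy.
Qed.

Lemma bipyr_nonedge_in_SR (k : fieldType) x y :
  (1 <= n)%N -> (1 <= x <= n)%N -> (1 <= y <= n)%N -> x <> y -> ~~ qn_edge n x y ->
  SR_ideal (k := k) (@bipyr_face n) ('X_(inord x) * 'X_(inord y)).
Proof.
move=> n1 Hx Hy xy nxy; apply: ideal_gen_sub; exists [set inord x; inord y].
split; first exact: bipyr_nonedge_nonface.
rewrite big_setU1 ?big_set1 //= inE; apply/eqP => /(congr1 val); rewrite /= !inordK; lia.
Qed.

Lemma sum_mnm_at (u : 'X_{1..n.+2}) a : (a < n.+2)%N ->
  (\sum_(v < n.+2) (v == a :> nat) * u v)%N = u (inord a).
Proof.
move=> lta; rewrite (bigD1 (inord a)) //= inordK // eqxx mul1n big1 ?addn0 // => v.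
by rewrite -val_eqE /= inordK // => /negbTE ->.
Qed.

Lemma mdeg_bipyr_facet (u : 'X_{1..n.+2}) a i : (2 <= n)%N ->
  (a == 0 \/ a == n.+1)%N -> (1 <= i <= n)%N ->
  mdeg u = (out_deg (bipyr_facet a i) u
            + u (inord a) + u (inord i) + u (inord (cyc_succ i)))%N.
Proof.
move=> n2 apex Hi; have := cyc_succE Hi; rewrite mdegE /out_deg => Hs.
have split_u (v : 'V) : u v = ((v \notin bipyr_facet a i) * u v + (v == a :> nat) * u v
    + (v == i :> nat) * u v + (v == cyc_succ i :> nat) * u v)%N.
  rewrite inE; case: (v =P a :> nat); case: (v =P i :> nat);
  case: (v =P cyc_succ i :> nat) => /= *; case: apex => /eqP; lia.
rewrite (eq_bigr _ (fun v _ => split_u v)) !big_split /= !sum_mnm_at //;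
  by case: apex => /eqP; lia.
Qed.

Lemma sum_cyc_succ (f : nat -> nat) : (1 <= n)%N ->
  (\sum_(1 <= i < n.+1) f (cyc_succ i) = \sum_(1 <= i < n.+1) f i)%N.
Proof.
move=> n1; rewrite big_nat_recr // big_nat_recl //= {2}/cyc_succ ltnn addnC.
by congr (_ + _)%N; apply: eq_big_nat => i /andP [_ ltin]; rewrite /cyc_succ ltin.
Qed.

Lemma bipyr_out_deg_bound (m : nat) (u : 'X_{1..n.+2}) : (4 <= n)%N ->
  (forall a i, (a == 0 \/ a == n.+1)%N -> (1 <= i <= n)%N ->
     (m <= out_deg (bipyr_facet a i) u)%N) ->
  (n * m <= (n - 2) * mdeg u)%N.
Proof.
move=> n4 facet_deg; pose w j := u (inord j).
pose B := (\sum_(1 <= i < n.+1) w i)%N.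
have mdegE' : mdeg u = (w 0 + B + w n.+1)%N.
  rewrite mdegE (eq_bigr (fun v : 'V => w v)) => [|v _]; last by rewrite /w inord_val.
  by rewrite -(big_mkord xpredT w) big_ltn // big_nat_recr //= addnA.
have apex_sum a : (a == 0 \/ a == n.+1)%N -> (n * m + n * w a + B + B <= n * mdeg u)%N.
  move=> apex; have : (\sum_(1 <= i < n.+1) (m + w a + w i + w (cyc_succ i))
      <= \sum_(1 <= i < n.+1) mdeg u)%N.
    rewrite big_nat_cond [X in (_ <= X)%N]big_nat_cond; apply: leq_sum => i /andP [Hi _].
    rewrite (mdeg_bipyr_facet u (ltnW (ltnW n4)) apex Hi).
    by have := facet_deg a i apex Hi; rewrite /w; lia.
  by rewrite !big_split /= sum_cyc_succ ?(leq_trans _ n4) // !sum_nat_const_nat subn1 /=; lia.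
have := apex_sum 0%N (or_introl (eqxx _)); have := apex_sum n.+1 (or_intror (eqxx _)).
have : (4 * (w 0 + w n.+1) <= n * (w 0 + w n.+1))%N by apply: leq_mul.
rewrite mulnBl; nia.
Qed.

End Bipyramid.

Lemma expr_prod_redistribute (R : comNzRingType) N (J : {set 'I_N}) (x a b : R)
    (G : 'I_N -> R) (c : nat) :
  x ^+ (#|J| * c) * (x * (a * (b * \prod_(v in J) G v))) ^+ c =
  x ^+ c * ((\prod_(v in J) (x * G v)) * (a * b)) ^+ c.
Proof.
rewrite big_split /= prodr_const !exprMn -exprM [LHS]mulrCA; congr (_ * _).
by rewrite -mulrA; congr (_ * _); rewrite mulrA mulrC.
Qed.

Section BipyramidIdeal.
Variables (k : fieldType) (n : nat).
Hypothesis n4 : (4 <= n)%N.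
Local Notation "''V'" := 'I_n.+2.
Local Notation I := (SR_ideal (k := k) (@bipyr_face n)).

Lemma bipyr_symb_pow_deg_ge m t : has_deg (symb_pow I m) t -> (n * m <= (n - 2) * t)%N.
Proof.
move=> [f [If [f0 fhom]]].
have <- : mdeg (mlead f) = t by move/dhomogP: fhom; apply; exact: mlead_supp.
apply: bipyr_out_deg_bound => // a i apex Hi.
apply: (symb_pow_out_deg_ge (@bipyr_face_down_closed n) _ If (mlead_supp f0)).
by apply: bipyr_facet_is_facet => //; lia.
Qed.

Definition base_verts : {set 'V} := [set v : 'V | 0 < v <= n]%N.

Lemma card_base_verts : #|base_verts| = n.
Proof.
have -> : base_verts = ~: [set ord0; ord_max].
  apply/setP => v; rewrite !inE -!val_eqE /=.
  move: (nat_of_ord v) (ltn_ord v) => j ltj; apply/idP/idP; lia.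
by rewrite cardsCs setCK cards2 card_ord -val_eqE /= subn2.
Qed.

Lemma ass_misses_base_var Q : ass I Q -> exists2 i : 'V, i \in base_verts & ~ Q 'X_i.
Proof.
move=> [Qprime [g Qg]].
have gI : ~ I g by move=> Ig; apply: (proj1 (proj2 Qprime)); apply/Qg; rewrite mul1r.
have [u gu fu] : exists2 u, u \in msupp g & @bipyr_face n (mnm_supp u).
  by apply: NNPP => nu; apply/gI/SR_ideal_of_msupp => u gu fu; apply: nu; exists u.
have [a [j [j' [apex [ejj' Bjj']]]]] := fu.
have [Hj _ _] := qn_edgeP (ltnW (ltnW (ltnW n4))) ejj'.
exists (inord j); first by rewrite inE inordK //; lia.
move/Qg => Ixg.
apply: (msupp_SR_ideal_nonface (@bipyr_face_down_closed n) Ixg (u := U_(inord j) + u)%MM).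
  by rewrite mcoeff_msupp mulrC mcoeffMX -mcoeff_msupp.
exists a, j, j'; split=> //; split=> // v; rewrite inE mnmDE mnm1E.
case: (inord j =P v) => [<- _ | _ /=]; first by rewrite inordK ?eqxx ?orbT //; lia.
by rewrite add0n => uv; apply: Bjj'; rewrite inE.
Qed.

Lemma bipyr_symb_pow_base m c : (m <= (n - 2) * c)%N ->
  symb_pow I m ((\prod_(v in base_verts) 'X_v) ^+ c).
Proof.
move=> mc Q QI; have [i0 + nQ] := ass_misses_base_var QI; rewrite inE => Hi.
have n3 : (3 <= n)%N by lia.
have := cyc_predE Hi; have := cyc_succE Hi.
set p := cyc_pred n i0; set q := cyc_succ n i0 => Hq Hp.
pose vp : 'V := inord p; pose vq : 'V := inord q.
have vpE : vp = p :> nat by rewrite inordK //; lia.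
have vqE : vq = q :> nat by rewrite inordK //; lia.
have Bp : vp \in base_verts :\ i0 by rewrite !inE -val_eqE /= vpE; lia.
have Bq : vq \in base_verts :\ i0 :\ vp by rewrite !inE -!val_eqE /= vpE vqE; lia.
have B0 : i0 \in base_verts by rewrite inE.
have cardJ : (#|base_verts :\ i0 :\ vp :\ vq| + 3 = n)%N.
  move: (cardsD1 i0 base_verts) (cardsD1 vp (base_verts :\ i0)).
  move: (cardsD1 vq (base_verts :\ i0 :\ vp)).
  rewrite B0 Bp Bq card_base_verts => h3 h1 h2.
  by rewrite [RHS]h1 h2 h3 addn3 !add1n.
set J := base_verts :\ i0 :\ vp :\ vq in cardJ *.
(* x_i0 pairs with every base vertex of J, the two neighbours of i0 pair with each other. *)
exists ('X_i0 ^+ (#|J| * c)); split; first exact: prime_ideal_notX (proj1 QI) nQ.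
rewrite (big_setD1 _ B0) (big_setD1 _ Bp) (big_setD1 _ Bq) -/J expr_prod_redistribute.
apply: ideal_genMl; apply: (@ideal_pow_le _ _ _ ((#|J| + 1) * c)).
  by rewrite (_ : (#|J| + 1 = n - 2)%N) //; lia.
apply/ideal_powX/ideal_powD.
  apply: ideal_pow_prod => v; rewrite !inE -!val_eqE /= vpE vqE => /and4P [vq' vp' vi0 Bv].
  rewrite -[X in 'X_X * _]inord_val -[v]inord_val; apply: bipyr_nonedge_in_SR => //; first lia.
    by apply/eqP; rewrite eq_sym.
  by apply/negP => /(qn_edge_nbr n3 Hi) [] /eqP; apply/negP.
apply/ideal_pow1/bipyr_nonedge_in_SR; [lia.. | exact: qn_nonedge_pred_succ].
Qed.

End BipyramidIdeal.

Lemma is_alpha_sig (k : fieldType) N (J : {mpoly k[N]} -> Prop) t0 :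
  has_deg J t0 -> {a : nat | is_alpha J a /\ (a <= t0)%N}.
Proof.
move=> Jt0; pose b t := if excluded_middle_informative (has_deg J t) then true else false.
have bP t : reflect (has_deg J t) (b t).
  by rewrite /b; case: excluded_middle_informative => h; constructor.
have ex_b : exists t, b t by exists t0; apply/bP.
exists (ex_minn ex_b); case: ex_minnP => a /bP Ja min_a; split; last exact/min_a/bP.
by split=> // t /bP /min_a.
Qed.

Section Convergence.
Local Open Scope R_scope.

Lemma Un_cv_nat_ratio (a : nat -> nat) (n d : nat) : (0 < d)%N ->
  (forall m, (0 < m)%N -> (n * m <= d * a m <= n * (m + d))%N) ->
  Un_cv (fun m => INR (a m) / INR m) (INR n / INR d).
Proof.
move=> d0 bounds eps eps0.
have D0 : 0 < INR d by apply/lt_0_INR/ltP.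
have n0 := pos_INR n.
have e1 : 0 < eps / (INR n + 1) by apply: Rdiv_lt_0_compat; lra.
have [N [N_eps /ltP N0]] := archimed_cor1 _ e1.
have N0' : 0 < INR N by apply/lt_0_INR/ltP.
have n_lt : INR n < eps * INR N.
  have := Rmult_lt_compat_r ((INR n + 1) * INR N) _ _ ltac:(nra) N_eps.
  have -> : / INR N * ((INR n + 1) * INR N) = INR n + 1 by field; lra.
  have -> : eps / (INR n + 1) * ((INR n + 1) * INR N) = eps * INR N by field; lra.
  lra.
exists N => m /leP mN; have m0 : (0 < m)%N by lia.
have M0 : 0 < INR m by apply/lt_0_INR/ltP.
have NM : INR N <= INR m by apply/le_INR/leP.
have /andP [/leP lo /leP hi] := bounds m m0.
move/le_INR: lo; move/le_INR: hi; rewrite !mult_INR plus_INR => hi lo.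
set x := INR (a m) / INR m - INR n / INR d.
have xE : x * (INR m * INR d) = INR d * INR (a m) - INR n * INR m by rewrite /x; field; lra.
have MD : 0 < INR m * INR d by nra.
have x0 : 0 <= x by nra.
have xM : x * INR m <= INR n by nra.
rewrite /R_dist -/x Rabs_pos_eq //; nra.
Qed.
End Convergence.

Theorem theorem1p1 (k : fieldType) (n : nat) :
  (4 <= n)%N ->
  waldschmidt_is (SR_ideal (k := k) (@bipyr_face n))
    (Reals.Rdefinitions.Rdiv (Reals.Raxioms.INR n) (Reals.Raxioms.INR (n - 2))).
Proof.
move=> n4; set I := SR_ideal _.
have deg_witness m : has_deg (symb_pow I m) (n * (m %/ (n - 2)).+1).
  exists ((\prod_(v in base_verts n) 'X_v) ^+ (m %/ (n - 2)).+1); split.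
    by apply: bipyr_symb_pow_base => //; rewrite mulnC ltnW // ltn_ceil //; lia.
  rewrite prodX_mnm_of_set mpolyXn; split; first exact: mpolyX_neq0.
  rewrite dhomogX; apply/eqP; have := mdegMn (mnm_of_set (base_verts n)) (m %/ (n - 2)).+1.
  by rewrite mdeg_mnm_of_set card_base_verts.
exists (fun m => sval (is_alpha_sig (deg_witness m))); split=> [m _|].
  by case: is_alpha_sig => a [].
apply: (@Un_cv_nat_ratio _ _ (n - 2)) => [|m m0]; first lia.
case: is_alpha_sig => a /= [alpha_a le_a]; apply/andP; split.
  exact: bipyr_symb_pow_deg_ge (proj1 alpha_a).
apply: leq_trans (leq_mul (leqnn (n - 2)) le_a) _.
by rewrite mulnCA leq_mul2l mulnS addnC leq_add2r mulnC leq_divM orbT.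
Qed.
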